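(* Let $G$ and $F$ be two nilpotent Chernikov $p$-groups, each with top $H_m$ and bottom $M^{(n)}$, and let $t,f:H_m\times H_m\to M_p^{(n)}$ be their associated commutator functions. Then $G\cong F$ if and only if there exist an automorphism $\sigma$ of $M^{(n)}$ and an automorphism $\theta$ of $H_m$ such that $f(\theta(x),\theta(y))=\sigma(t(x,y))$ for all $x,y\in H_m$.
   Context: Groups are written additively; $[u,v]=u+v-u-v$. A Chernikov $p$-group $G$ is an extension of a finite direct sum $M$ of quasi-cyclic $p$-groups (its bottom; it is the largest divisible abelian subgroup of $G$) by a finite $p$-group $H=G/M$ (its top). $M^{(n)}$ denotes the direct sum of $n$ quasi-cyclic $p$-groups, $M_p^{(n)}=\{a\in M^{(n)}:pa=0\}$, and $H_m$ is the elementary abelian $p$-group of rank $m$. For a nilpotent Chernikov $p$-group $G$ with bottom $M^{(n)}$ and top $H_m$ (so $H_m$ acts trivially on $M^{(n)}$), its commutator function is $t(x,y)=[\bar x,\bar y]$, where $\bar x,\bar y\in G$ are any preimages of $x,y\in H_m$; it is well defined and is a skew-symmetric bilinear map $H_m\times H_m\to M_p^{(n)}$. *)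

From HB Require Import structures.
From mathcomp Require Import all_boot all_order all_algebra all_field.
Set Implicit Arguments. Unset Strict Implicit. Unset Printing Implicit Defensive.
Import GRing.Theory Num.Theory.
Local Open Scope ring_scope.

Definition is_group (T : Type) (add : T -> T -> T) (z : T) (opp : T -> T) : Prop :=
  [/\ (forall x y w, add x (add y w) = add (add x y) w),
      (forall x, add z x = x) &
      (forall x, add (opp x) x = z)].

Record group := Group {
  gcarrier :> Type;
  gadd : gcarrier -> gcarrier -> gcarrier;
  gzero : gcarrier;
  gopp : gcarrier -> gcarrier;
  gaxiom : is_group gadd gzero gopp }.

Arguments gadd {g}. Arguments gzero {g}. Arguments gopp {g}.

Definition gcomm (G : group) (u v : G) : G :=
  gadd (gadd (gadd u v) (gopp u)) (gopp v).

Definition group_iso (G F : group) (f : G -> F) : Prop :=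
  bijective f /\ forall x y, f (gadd x y) = gadd (f x) (f y).

Inductive gen (G : group) (S : G -> Prop) : G -> Prop :=
  | gen_base x : S x -> gen S x
  | gen_zero : gen S gzero
  | gen_add x y : gen S x -> gen S y -> gen S (gadd x y)
  | gen_opp x : gen S x -> gen S (gopp x).

(* lower central series: lcs G i = gamma_(i+1)(G) *)
Fixpoint lcs (G : group) (i : nat) : G -> Prop :=
  match i with
  | 0 => fun _ => True
  | i'.+1 => @gen G (fun z => exists x y, @lcs G i' x /\ z = gcomm x y)
  end.

Definition nilpotent (G : group) : Prop :=
  exists c, forall x : G, @lcs G c x -> x = gzero.

(* ---------- The model of M^(n): n-tuples of p-power roots of unity in algC
   (the quasi-cyclic p-group Z(p^oo) written multiplicatively). ---------- *)
Definition prufer_elt (p : nat) (z : algC) : Prop := exists k, z ^+ (p ^ k) = 1.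

Definition inM (p n : nat) (v : 'I_n -> algC) : Prop := forall i, prufer_elt p (v i).
Arguments inM : clear implicits.

(* the group law of M^(n) (the paper's "+", here coordinatewise product) *)
Definition Mop (n : nat) (u v : 'I_n -> algC) : 'I_n -> algC := fun i => u i * v i.

Definition autM (p n : nat) (s : ('I_n -> algC) -> ('I_n -> algC)) : Prop :=
  [/\ (forall u, inM p n u -> inM p n (s u)),
      (forall u v, inM p n u -> inM p n v -> s (Mop u v) = Mop (s u) (s v)),
      (forall u v, inM p n u -> inM p n v -> s u = s v -> u = v) &
      (forall v, inM p n v -> exists2 u, inM p n u & s u = v)].
Arguments autM : clear implicits.

(* H_m = elementary abelian p-group of rank m, modelled as 'rV['F_p]_m;
   automorphism of H_m *)
Definition autH (p m : nat) (th : 'rV['F_p]_m -> 'rV['F_p]_m) : Prop :=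
  bijective th /\ forall x y, th (x + y) = th x + th y.

(* G is an extension of M^(n) by H_m:  1 -> M^(n) -phi-> G -pi-> H_m -> 1,
   i.e. phi is an isomorphism of M^(n) onto the normal subgroup M = ker pi
   (the bottom of G), and pi induces G/M ~= H_m (the top). *)
Definition chernikov_ext (p n m : nat) (G : group)
    (phi : ('I_n -> algC) -> G) (pi : G -> 'rV['F_p]_m) : Prop :=
  [/\ (forall u v, inM p n u -> inM p n v -> phi (Mop u v) = gadd (phi u) (phi v)),
      (forall u v, inM p n u -> inM p n v -> phi u = phi v -> u = v),
      (forall x y, pi (gadd x y) = pi x + pi y),
      (forall w, exists x, pi x = w) &
      (forall x, pi x = 0 <-> exists2 u, inM p n u & phi u = x)].

(* graph of the commutator function: t(x,y) = w  iff  [xbar, ybar] = w for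
   (some, equivalently any) preimages xbar, ybar of x, y. *)
Definition comm_fun (p n m : nat) (G : group)
    (phi : ('I_n -> algC) -> G) (pi : G -> 'rV['F_p]_m)
    (x y : 'rV['F_p]_m) (w : 'I_n -> algC) : Prop :=
  inM p n w /\ exists g h, [/\ pi g = x, pi h = y & phi w = gcomm g h].

From mathcomp Require Import all_boot all_order all_algebra all_field.
From Stdlib Require Import ClassicalEpsilon FunctionalExtensionality.
Import GRing.Theory Num.Theory.
Set Implicit Arguments. Unset Strict Implicit. Unset Printing Implicit Defensive.

(* The bottom M of a nilpotent Chernikov p-group G with elementary abelian top
   is central: it is divisible, and [p g] lies in M for every g, which lets the
   vanishing of iterated commutators [..[z, g], .., g] on M descend one step at
   a time. So commutators are central and depend only on the tops of their
   arguments, and every basis vector e_i of the top lifts to some g_i of order p.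
   An isomorphism maps M onto the bottom of F (M is divisible, the top of F has
   exponent p), so it induces sigma on bottoms and theta on tops. Conversely,
   pick lifts g_i in G of e_i and h_i in F of theta(e_i) of order p; every
   element of G is uniquely sum_i c_i g_i + z with z in M, and the collection
   formula shows that sum_i c_i g_i + z |-> sum_i c_i h_i + sigma(z) is additive,
   because the correction terms are sums of commutators, which sigma carries to
   the corresponding commutators of F. *)

Local Notation "x ⊕ y" := (gadd x y) (at level 50, left associativity).
Local Notation "⊖ x" := (gopp x) (at level 35, x at level 35).

Section GroupTheory.
Variable G : group.
Implicit Types x y z u v w a b : G.

Lemma gaddA x y z : x ⊕ (y ⊕ z) = x ⊕ y ⊕ z.
Proof. by case: (gaxiom G). Qed.
Lemma add0g x : gzero ⊕ x = x.
Proof. by case: (gaxiom G). Qed.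
Lemma addNg x : ⊖ x ⊕ x = gzero.
Proof. by case: (gaxiom G). Qed.
Lemma addKg x y : ⊖ x ⊕ (x ⊕ y) = y.
Proof. by rewrite gaddA addNg add0g. Qed.
Lemma addgN x : x ⊕ ⊖ x = gzero.
Proof. by rewrite -[LHS](addKg (⊖ x)) [⊖ x ⊕ _]gaddA addNg add0g addNg. Qed.
Lemma addg0 x : x ⊕ gzero = x.
Proof. by rewrite -(addNg x) gaddA addgN add0g. Qed.
Lemma addNKg x y : x ⊕ (⊖ x ⊕ y) = y.
Proof. by rewrite gaddA addgN add0g. Qed.
Lemma addgK x y : y ⊕ x ⊕ ⊖ x = y.
Proof. by rewrite -gaddA addgN addg0. Qed.
Lemma addgNK x y : y ⊕ ⊖ x ⊕ x = y.
Proof. by rewrite -gaddA addNg addg0. Qed.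
Lemma addgI x : injective (gadd x).
Proof. by move=> y z e; rewrite -(addKg x y) e addKg. Qed.
Lemma addIg x : injective (gadd^~ x).
Proof. by move=> y z e; rewrite -(addgK x y) e addgK. Qed.
Lemma oppgD x y : ⊖ (x ⊕ y) = ⊖ y ⊕ ⊖ x.
Proof. by apply: (@addgI (x ⊕ y)); rewrite addgN -gaddA addNKg addgN. Qed.
Lemma oppg0 : ⊖ gzero = gzero :> G.
Proof. by rewrite -[LHS]add0g addgN. Qed.
Lemma addNg_eq0 x y : ⊖ x ⊕ y = gzero -> x = y.
Proof. by move=> e; rewrite -(addNKg x y) e addg0. Qed.

Fixpoint gmuln k x := if k is k'.+1 then gmuln k' x ⊕ x else gzero.

Lemma gmulnD k l x : gmuln (k + l) x = gmuln k x ⊕ gmuln l x.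
Proof. by elim: l => [|l IH]; rewrite ?addn0 ?addg0 // addnS /= IH gaddA. Qed.
Lemma gmul0n k : gmuln k gzero = gzero :> G.
Proof. by elim: k => //= k ->; rewrite addg0. Qed.
Lemma commute_gmuln k x y : x ⊕ y = y ⊕ x -> x ⊕ gmuln k y = gmuln k y ⊕ x.
Proof.
by move=> e; elim: k => [|k IH] /=; rewrite ?add0g ?addg0 // gaddA IH -gaddA e gaddA.
Qed.
Lemma gmulnN k x : gmuln k (⊖ x) = ⊖ gmuln k x.
Proof.
elim: k => [|k IH] /=; first by rewrite oppg0.
by rewrite IH -oppgD (commute_gmuln k (erefl (x ⊕ x))).
Qed.
Lemma gmuln_mod d k x : gmuln d x = gzero -> gmuln (k %% d) x = gmuln k x.
Proof.
move=> dx0; rewrite {2}(divn_eq k d) gmulnD.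
suff -> : gmuln (k %/ d * d) x = gzero by rewrite add0g.
by elim: (k %/ d) => [|q IH] //; rewrite mulSn gmulnD dx0 IH add0g.
Qed.

Definition central z := forall x, z ⊕ x = x ⊕ z.

Lemma central0 : central gzero.
Proof. by move=> x; rewrite add0g addg0. Qed.
Lemma centralD z w : central z -> central w -> central (z ⊕ w).
Proof. by move=> cz cw x; rewrite -gaddA cw gaddA cz gaddA. Qed.
Lemma centralN z : central z -> central (⊖ z).
Proof. by move=> cz x; apply: (@addgI z); rewrite addNKg gaddA cz addgK. Qed.
Lemma gmulnDc k x z : central z -> gmuln k (x ⊕ z) = gmuln k x ⊕ gmuln k z.
Proof.
move=> cz; elim: k => [|k IH] /=; first by rewrite add0g.
rewrite IH -!gaddA; congr (_ ⊕ _); rewrite !gaddA; congr (_ ⊕ _).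
by rewrite commute_gmuln.
Qed.

Lemma gcomm_swap u v : u ⊕ v = gcomm u v ⊕ v ⊕ u.
Proof. by rewrite /gcomm !addgNK. Qed.
Lemma gcomm_eq u v (c : G) : u ⊕ v = c ⊕ v ⊕ u -> gcomm u v = c.
Proof. by move=> e; apply: (@addIg v); apply: (@addIg u); rewrite -gcomm_swap. Qed.
Lemma gcomm_eq0 u v : gcomm u v = gzero <-> u ⊕ v = v ⊕ u.
Proof.
split=> [e|e]; first by rewrite gcomm_swap e add0g.
by apply: gcomm_eq; rewrite add0g.
Qed.
Lemma gcomm0g x : gcomm gzero x = gzero.
Proof. by apply/gcomm_eq0; rewrite add0g addg0. Qed.
Lemma gcommg0 x : gcomm x gzero = gzero.
Proof. by apply/gcomm_eq0; rewrite add0g addg0. Qed.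

Lemma gcommDcl a z b : central z -> gcomm (a ⊕ z) b = gcomm a b.
Proof.
move=> cz; apply: gcomm_eq; move: (gcomm_swap a b); move: (gcomm a b) => c e.
by rewrite -gaddA cz gaddA e !gaddA.
Qed.
Lemma gcommDcr a b z : central z -> gcomm a (b ⊕ z) = gcomm a b.
Proof.
move=> cz; apply: gcomm_eq; move: (gcomm_swap a b); move: (gcomm a b) => c e.
by rewrite gaddA e -[c ⊕ b ⊕ a ⊕ z]gaddA -cz !gaddA.
Qed.

Lemma gcommDr y a b : gcomm y b ⊕ a = a ⊕ gcomm y b ->
  gcomm y (a ⊕ b) = gcomm y a ⊕ gcomm y b.
Proof.
move=> e; apply: gcomm_eq; move: (gcomm_swap y a) (gcomm_swap y b) e.
move: (gcomm y a) (gcomm y b) => ca cb ea eb e.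
by rewrite gaddA ea -[ca ⊕ a ⊕ y ⊕ b]gaddA eb !gaddA -[ca ⊕ a ⊕ cb]gaddA -e !gaddA.
Qed.
Lemma gcommDl a b x : a ⊕ gcomm b x = gcomm b x ⊕ a ->
  gcomm b x ⊕ gcomm a x = gcomm a x ⊕ gcomm b x ->
  gcomm (a ⊕ b) x = gcomm a x ⊕ gcomm b x.
Proof.
move=> e1 e2; apply: gcomm_eq; move: (gcomm_swap a x) (gcomm_swap b x) e1 e2.
move: (gcomm a x) (gcomm b x) => ca cb ea eb e1 e2.
by rewrite -gaddA eb !gaddA e1 -[cb ⊕ a ⊕ x]gaddA ea !gaddA e2.
Qed.

Lemma gcommr_gmuln k y x : gcomm (gcomm y x) x = gzero ->
  gcomm y (gmuln k x) = gmuln k (gcomm y x).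
Proof.
move=> /gcomm_eq0 e; elim: k => [|k IH] /=; first exact: gcommg0.
by rewrite gcommDr ?IH //; apply: commute_gmuln.
Qed.

Section Collection.
Hypothesis gcomm_central : forall a b, central (gcomm a b).
Variable gen : nat -> G.

Fixpoint word (c : nat -> nat) k :=
  if k is k'.+1 then word c k' ⊕ gmuln (c k') (gen k') else gzero.
Fixpoint word_defect (c1 c2 : nat -> nat) k :=
  if k is k'.+1 then
    word_defect c1 c2 k' ⊕ gcomm (gmuln (c1 k') (gen k')) (word c2 k')
  else gzero.

Lemma central_word_defect c1 c2 k : central (word_defect c1 c2 k).
Proof. by elim: k => [|k IH] /=; [exact: central0 | exact: centralD]. Qed.

Lemma word_add c1 c2 c3 :
    (forall i, gmuln (c1 i + c2 i) (gen i) = gmuln (c3 i) (gen i)) ->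
  forall k, word c1 k ⊕ word c2 k = word c3 k ⊕ word_defect c1 c2 k.
Proof.
move=> c12; elim=> [|k IH] /=; first by rewrite add0g.
have cD := central_word_defect c1 c2 k.
have cC := gcomm_central (gmuln (c1 k) (gen k)) (word c2 k).
move: (gcomm_swap (gmuln (c1 k) (gen k)) (word c2 k)) IH cC.
move: (gcomm _ _) (word_defect c1 c2 k) cD => C D cD eC IH cC.
rewrite -gaddA [gmuln _ _ ⊕ _]gaddA eC !gaddA -(cC (word c1 k)).
rewrite -[C ⊕ word c1 k ⊕ word c2 k]gaddA IH -!gaddA.
by rewrite (cD (_ ⊕ gmuln (c2 k) (gen k))) -gmulnD c12 cC -!gaddA.
Qed.
End Collection.

End GroupTheory.

Section Homomorphism.
Variables (G F : group) (f : G -> F).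
Hypothesis f_add : forall x y, f (x ⊕ y) = f x ⊕ f y.

Lemma hom0 : f gzero = gzero.
Proof. by apply: (@addgI _ (f gzero)); rewrite -f_add !addg0. Qed.
Lemma homN x : f (⊖ x) = ⊖ f x.
Proof. by apply: (@addgI _ (f x)); rewrite -f_add !addgN hom0. Qed.
Lemma hom_gmuln k x : f (gmuln k x) = gmuln k (f x).
Proof. by elim: k => [|k IH] /=; rewrite ?hom0 // f_add IH. Qed.
Lemma hom_gcomm x y : f (gcomm x y) = gcomm (f x) (f y).
Proof. by rewrite /gcomm !f_add !homN. Qed.

Lemma hom_inj : (forall x, f x = gzero -> x = gzero) -> injective f.
Proof.
move=> ker0 x y e; apply: addNg_eq0; apply: ker0.
by rewrite f_add homN e addNg.
Qed.

Lemma hom_iso : injective f -> (forall y, exists x, f x = y) -> group_iso f.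
Proof.
move=> f_inj f_surj; split=> //.
pose g y := epsilon (inhabits gzero) (fun x => f x = y).
have gK y : f (g y) = y.
  exact: (epsilon_spec (inhabits gzero) (fun x => f x = y) (f_surj y)).
by exists g => [x|y]; [apply: f_inj; rewrite gK | exact: gK].
Qed.
End Homomorphism.

Lemma group_iso_inv (G F : group) (f : G -> F) : group_iso f ->
  exists g : F -> G, [/\ forall x y, g (x ⊕ y) = g x ⊕ g y, cancel f g & cancel g f].
Proof.
case=> -[g fK gK] f_add; exists g; split=> // x y.
by apply: (can_inj fK); rewrite f_add !gK.
Qed.

Local Open Scope ring_scope.

Definition Mone n : 'I_n -> algC := fun _ => 1.
Arguments Mone : clear implicits.
Definition Mpow n k (u : 'I_n -> algC) : 'I_n -> algC := fun i => u i ^+ k.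

Section PruferTuples.
Variables p n : nat.
Implicit Types u v : 'I_n -> algC.

Lemma inM_Mone : inM p n (Mone n).
Proof. by move=> i; exists 0%N; rewrite expr1n. Qed.

Lemma inM_Mop u v : inM p n u -> inM p n v -> inM p n (Mop u v).
Proof.
move=> hu hv i; case: (hu i) => a ha; case: (hv i) => b hb; exists (a + b)%N.
by rewrite exprMn expnD exprM ha expr1n mulnC exprM hb expr1n mulr1.
Qed.

Lemma MopC u v : Mop u v = Mop v u.
Proof. by apply: functional_extensionality => i; rewrite /Mop mulrC. Qed.
Lemma Mop1 u : Mop (Mone n) u = u.
Proof. by apply: functional_extensionality => i; rewrite /Mop mul1r. Qed.
Lemma Mpow0 u : Mpow 0 u = Mone n.
Proof. by apply: functional_extensionality => i; rewrite /Mpow expr0. Qed.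
Lemma MpowS k u : Mpow k.+1 u = Mop (Mpow k u) u.
Proof. by apply: functional_extensionality => i; rewrite /Mop /Mpow exprSr. Qed.

Lemma inM_Mpow k u : inM p n u -> inM p n (Mpow k u).
Proof.
move=> hu; elim: k => [|k IH]; first by rewrite Mpow0; apply: inM_Mone.
by rewrite MpowS; apply: inM_Mop.
Qed.

Lemma inM_divisible u : (0 < p)%N -> inM p n u -> exists2 v, inM p n v & Mpow p v = u.
Proof.
move=> p_gt0 hu; exists (fun i => p.-root (u i)).
  by move=> i; case: (hu i) => k hk; exists k.+1; rewrite expnS exprM rootCK.
by apply: functional_extensionality => i; rewrite /Mpow rootCK.
Qed.
End PruferTuples.

Section ChernikovExtension.
Variables (p n m : nat) (G : group).
Variables (phi : ('I_n -> algC) -> G) (pi : G -> 'rV['F_p]_m).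
Hypothesis p_pr : prime p.
Hypothesis ext : chernikov_ext phi pi.
Implicit Types (u v : 'I_n -> algC) (x y z w g : G).

Lemma phiM u v : inM p n u -> inM p n v -> phi (Mop u v) = phi u ⊕ phi v.
Proof. by case: ext => + *; apply. Qed.
Lemma phi_inj u v : inM p n u -> inM p n v -> phi u = phi v -> u = v.
Proof. by case: ext => _ + *; apply. Qed.
Lemma piD x y : pi (x ⊕ y) = pi x + pi y.
Proof. by case: ext => _ _ + *; apply. Qed.
Lemma pi_surj r : exists x, pi x = r.
Proof. by case: ext => _ _ _ + *; apply. Qed.
Lemma pi_eq0 x : pi x = 0 <-> exists2 u, inM p n u & phi u = x.
Proof. by case: ext => _ _ _ _; apply. Qed.

Lemma pi0 : pi gzero = 0.
Proof. by apply: (addrI (pi gzero)); rewrite -piD add0g addr0. Qed.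
Lemma piN x : pi (⊖ x) = - pi x.
Proof. by apply: (addrI (pi x)); rewrite -piD addgN pi0 subrr. Qed.
Lemma pi_gmuln k x : pi (gmuln k x) = pi x *+ k.
Proof. by elim: k => [|k IH] /=; rewrite ?pi0 // piD IH mulrSr. Qed.
Lemma pi_gmuln_char x : pi (gmuln p x) = 0.
Proof. by rewrite pi_gmuln -scaler_nat pchar_Fp_0 // scale0r. Qed.
Lemma pi_gcomm x y : pi (gcomm x y) = 0.
Proof. by rewrite /gcomm !piD !piN addrAC addrK subrr. Qed.

Lemma phi_Mone : phi (Mone n) = gzero.
Proof.
apply: (@addgI _ (phi (Mone n))).
by rewrite addg0 -phiM ?Mop1 //; apply: inM_Mone.
Qed.
Lemma phi_Mpow k u : inM p n u -> phi (Mpow k u) = gmuln k (phi u).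
Proof.
move=> hu; elim: k => [|k IH]; first by rewrite Mpow0 phi_Mone.
by rewrite MpowS phiM ?IH //; apply: inM_Mpow.
Qed.

Definition bottom x := pi x = 0.

Lemma bottomD x y : bottom x -> bottom y -> bottom (x ⊕ y).
Proof. by rewrite /bottom piD => -> ->; rewrite addr0. Qed.
Lemma bottom_phi u : inM p n u -> bottom (phi u).
Proof. by move=> hu; apply/pi_eq0; exists u. Qed.
Lemma bottom_pi_eq x y : pi x = pi y -> bottom (⊖ x ⊕ y).
Proof. by rewrite /bottom piD piN => ->; rewrite addNr. Qed.

Lemma bottomC x y : bottom x -> bottom y -> x ⊕ y = y ⊕ x.
Proof. by move=> /pi_eq0 [u hu <-] /pi_eq0 [v hv <-]; rewrite -!phiM // MopC. Qed.

Lemma bottom_divisible x : bottom x -> exists2 y, bottom y & gmuln p y = x.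
Proof.
move=> /pi_eq0 [u hu <-]; case: (inM_divisible (prime_gt0 p_pr) hu) => v hv <-.
by exists (phi v); [apply: bottom_phi | rewrite phi_Mpow].
Qed.

Lemma gcommDl_bottom x y g : bottom x -> bottom y ->
  gcomm (x ⊕ y) g = gcomm x g ⊕ gcomm y g.
Proof.
move=> xb yb; apply: gcommDl; apply: bottomC => //; exact: pi_gcomm.
Qed.

Section CommutatorWithFixedElement.
Variable g : G.

Definition iter_gcomm j x := iter j (fun y => gcomm y g) x.

Lemma lcs_iter_gcomm j x : lcs j (iter_gcomm j x).
Proof. by elim: j => //= j IH; apply: gen_base; exists (iter_gcomm j x), g. Qed.

Lemma bottom_iter_gcomm j x : bottom x -> bottom (iter_gcomm j x).
Proof. by case: j => //= j _; apply: pi_gcomm. Qed.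

Lemma iter_gcommD j x y : bottom x -> bottom y ->
  iter_gcomm j (x ⊕ y) = iter_gcomm j x ⊕ iter_gcomm j y.
Proof.
move=> xb yb; elim: j => //= j IH.
by rewrite IH gcommDl_bottom //; apply: bottom_iter_gcomm.
Qed.

Lemma iter_gcomm_gmuln j k x : bottom x -> iter_gcomm j (gmuln k x) = gmuln k (iter_gcomm j x).
Proof.
move=> xb; elim: k => [|k IH] /=; first by elim: j => //= j ->; rewrite gcomm0g.
by rewrite iter_gcommD ?IH // /bottom pi_gmuln xb mul0rn.
Qed.

(* Since [p g] lies in the abelian bottom, [[y, g], g] = 0 forces
   [p [y, g] = [y, p g] = 0]; divisibility of the bottom then lets the
   vanishing of [iter_gcomm] on the bottom descend by one step. *)
Lemma iter_gcomm_descend j : (forall x, bottom x -> iter_gcomm j.+2 x = gzero) ->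
  forall x, bottom x -> iter_gcomm j.+1 x = gzero.
Proof.
move=> vanish x /bottom_divisible [y yb <-]; rewrite iter_gcomm_gmuln //=.
have ygg0 : gcomm (gcomm (iter_gcomm j y) g) g = gzero := vanish y yb.
rewrite -gcommr_gmuln //; apply/gcomm_eq0/bottomC.
  exact: bottom_iter_gcomm.
exact: pi_gmuln_char.
Qed.

Lemma iter_gcomm_vanish_gcomm j : (forall x, bottom x -> iter_gcomm j.+1 x = gzero) ->
  forall x, bottom x -> gcomm x g = gzero.
Proof. by elim: j => [|j IH] vanish; [exact: vanish | apply/IH/iter_gcomm_descend]. Qed.
End CommutatorWithFixedElement.

Section Nilpotent.
Hypothesis nil : nilpotent G.

Lemma bottom_central x : bottom x -> central x.
Proof.
move=> xb g; apply/gcomm_eq0; case: nil => c lcs0.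
apply: (@iter_gcomm_vanish_gcomm g c) => // y _ /=.
by rewrite (lcs0 _ (lcs_iter_gcomm g c y)) gcomm0g.
Qed.

Lemma gcomm_central x y : central (gcomm x y).
Proof. exact/bottom_central/pi_gcomm. Qed.

Lemma exists_lift_p r : exists x, pi x = r /\ gmuln p x = gzero.
Proof.
case: (pi_surj r) => x <-; case: (bottom_divisible (pi_gmuln_char x)) => y yb px.
exists (x ⊕ ⊖ y); split; first by rewrite piD piN yb oppr0 addr0.
by rewrite gmulnDc ?gmulnN ?px ?addgN //; apply/centralN/bottom_central.
Qed.

Lemma gcomm_pi_eq x x' y y' : pi x = pi x' -> pi y = pi y' -> gcomm x y = gcomm x' y'.
Proof.
move=> /bottom_pi_eq/bottom_central cx /bottom_pi_eq/bottom_central cy.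
by rewrite -(addNKg x x') -(addNKg y y') gcommDcl ?gcommDcr.
Qed.
End Nilpotent.

Definition phi_inv x := epsilon (inhabits (Mone n)) (fun u => inM p n u /\ phi u = x).

Lemma phi_invP x : bottom x -> inM p n (phi_inv x) /\ phi (phi_inv x) = x.
Proof.
move=> /pi_eq0 [u hu ux].
by apply: (epsilon_spec _ (fun u => inM p n u /\ phi u = x)); exists u.
Qed.

Lemma phiK u : inM p n u -> phi_inv (phi u) = u.
Proof. by move=> hu; have [hv e] := phi_invP (bottom_phi hu); apply: phi_inj. Qed.

Definition top_lift r := epsilon (inhabits gzero) (fun x => pi x = r).

Lemma top_liftK r : pi (top_lift r) = r.
Proof. exact: (epsilon_spec _ (fun x => pi x = r) (pi_surj r)). Qed.

Definition top_lift_p r :=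
  epsilon (inhabits gzero) (fun x => pi x = r /\ gmuln p x = gzero).

Lemma top_lift_pP (nil : nilpotent G) r :
  pi (top_lift_p r) = r /\ gmuln p (top_lift_p r) = gzero.
Proof.
exact: (epsilon_spec _ (fun x => pi x = r /\ gmuln p x = gzero) (exists_lift_p nil r)).
Qed.

End ChernikovExtension.

Section HomomorphismOfExtensions.
Variables (p n m : nat) (G F : group).
Variables (phiG : ('I_n -> algC) -> G) (piG : G -> 'rV['F_p]_m).
Variables (phiF : ('I_n -> algC) -> F) (piF : F -> 'rV['F_p]_m).
Hypothesis p_pr : prime p.
Hypotheses (extG : chernikov_ext phiG piG) (extF : chernikov_ext phiF piF).
Variable f : G -> F.
Hypothesis f_add : forall x y, f (x ⊕ y) = f x ⊕ f y.

Lemma hom_bottom x : bottom piG x -> bottom piF (f x).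
Proof.
move=> /(bottom_divisible p_pr extG) [y _ <-].
by rewrite /bottom (hom_gmuln f_add) (pi_gmuln_char p_pr extF).
Qed.

Lemma hom_pi_eq x y : piG x = piG y -> piF (f x) = piF (f y).
Proof.
move=> /(bottom_pi_eq extG) /hom_bottom.
rewrite /bottom f_add (homN f_add) (piD extF) (piN extF) => /eqP.
by rewrite addrC subr_eq0 => /eqP.
Qed.
End HomomorphismOfExtensions.

Section IsomorphismToAutomorphisms.
Variables (p n m : nat) (G F : group).
Variables (phiG : ('I_n -> algC) -> G) (piG : G -> 'rV['F_p]_m).
Variables (phiF : ('I_n -> algC) -> F) (piF : F -> 'rV['F_p]_m).
Hypothesis p_pr : prime p.
Hypotheses (extG : chernikov_ext phiG piG) (extF : chernikov_ext phiF piF).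
Variables (f : G -> F) (g : F -> G).
Hypotheses (f_add : forall x y, f (x ⊕ y) = f x ⊕ f y)
           (g_add : forall x y, g (x ⊕ y) = g x ⊕ g y).
Hypotheses (fK : cancel f g) (gK : cancel g f).

Definition bottom_aut u := phi_inv p phiF (f (phiG u)).
Definition top_aut r := piF (f (top_lift piG r)).

Lemma bottom_autP u : inM p n u -> inM p n (bottom_aut u) /\ phiF (bottom_aut u) = f (phiG u).
Proof. by move=> hu; apply/(phi_invP extF)/(hom_bottom p_pr extG extF f_add)/(bottom_phi extG). Qed.

Lemma autM_bottom_aut : autM p n bottom_aut.
Proof.
split.
- by move=> u /bottom_autP [].
- move=> u v hu hv; have [su eu] := bottom_autP hu; have [sv ev] := bottom_autP hv.
  have [suv euv] := bottom_autP (inM_Mop hu hv).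
  apply: (phi_inj extF) => //; first exact: inM_Mop.
  by rewrite euv (phiM extG) // f_add (phiM extF) // eu ev.
- move=> u v hu hv e; have [_ eu] := bottom_autP hu; have [_ ev] := bottom_autP hv.
  by apply: (phi_inj extG) => //; apply: (can_inj fK); rewrite -eu -ev e.
- move=> v hv.
  have /(pi_eq0 extG) [u hu eu] := hom_bottom p_pr extF extG g_add (bottom_phi extF hv).
  exists u => //; have [su e] := bottom_autP hu.
  by apply: (phi_inj extF) => //; rewrite e eu gK.
Qed.

Lemma autH_top_aut : autH top_aut.
Proof.
split=> [|r s]; last first.
  rewrite /top_aut -(piD extF) -f_add; apply: (hom_pi_eq p_pr extG extF f_add).
  by rewrite (piD extG) !(top_liftK extG).
exists (fun r => piG (g (top_lift piF r))) => r; rewrite /top_aut.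
  rewrite (hom_pi_eq p_pr extF extG g_add (y := f (top_lift piG r))) ?(top_liftK extF) //.
  by rewrite fK (top_liftK extG).
rewrite (hom_pi_eq p_pr extG extF f_add (y := g (top_lift piF r))) ?(top_liftK extG) //.
by rewrite gK (top_liftK extF).
Qed.

Lemma comm_fun_aut r s w :
  comm_fun phiG piG r s w -> comm_fun phiF piF (top_aut r) (top_aut s) (bottom_aut w).
Proof.
case=> hw [x [y [xr ys e]]]; have [sw ew] := bottom_autP hw.
split=> //; exists (f x), (f y); split; last by rewrite ew e (hom_gcomm f_add).
all: by apply: (hom_pi_eq p_pr extG extF f_add); rewrite (top_liftK extG).
Qed.
End IsomorphismToAutomorphisms.

(* Coordinates and generators are indexed by [nat] so that words can be built
   by recursion; indices [i >= m] contribute nothing. *)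
Definition coord p m (r : 'rV['F_p]_m) i : nat :=
  if (insub i : option 'I_m) is Some j then r 0 j else 0%N.

Lemma coord0 p m i : coord (0 : 'rV['F_p]_m) i = 0%N.
Proof. by rewrite /coord; case: insubP => // j _ _; rewrite mxE. Qed.

Lemma gmuln_coordD (H : group) p m (r s : 'rV['F_p]_m) i (x : H) :
  prime p -> gmuln p x = gzero ->
  gmuln (coord r i + coord s i) x = gmuln (coord (r + s) i) x.
Proof.
move=> p_pr px0; rewrite /coord; case: insubP => // j _ _.
rewrite mxE; set a := r 0 j; set b := s 0 j.
have -> : nat_of_ord (a + b) = ((a + b) %% p)%N by rewrite -val_Fp_nat // natrD !natr_Zp.
by rewrite gmuln_mod.
Qed.

Lemma word_coord0 (H : group) (gen : nat -> H) p m k :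
  word gen (coord (0 : 'rV['F_p]_m)) k = gzero.
Proof. by elim: k => //= k ->; rewrite coord0 add0g. Qed.

Section AutomorphismsToIsomorphism.
Variables (p n m : nat) (G F : group).
Variables (phiG : ('I_n -> algC) -> G) (piG : G -> 'rV['F_p]_m).
Variables (phiF : ('I_n -> algC) -> F) (piF : F -> 'rV['F_p]_m).
Hypothesis p_pr : prime p.
Hypotheses (nilG : nilpotent G) (extG : chernikov_ext phiG piG).
Hypotheses (nilF : nilpotent F) (extF : chernikov_ext phiF piF).
Variables (sigma : ('I_n -> algC) -> ('I_n -> algC)) (theta : 'rV['F_p]_m -> 'rV['F_p]_m).
Hypotheses (sigma_aut : autM p n sigma) (theta_aut : autH theta).
Hypothesis comm_fun_sigma_theta : forall r s w,
  comm_fun phiG piG r s w -> comm_fun phiF piF (theta r) (theta s) (sigma w).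

Lemma thetaD r s : theta (r + s) = theta r + theta s.
Proof. by case: theta_aut => _; apply. Qed.
Lemma theta0 : theta 0 = 0.
Proof. by apply: (addrI (theta 0)); rewrite -thetaD !addr0. Qed.
Lemma thetaMn k r : theta (r *+ k) = theta r *+ k.
Proof. by elim: k => [|k IH]; rewrite ?theta0 // !mulrSr thetaD IH. Qed.
Lemma theta_inj : injective theta.
Proof. by case: theta_aut => -[theta' thetaK _] _; apply: can_inj thetaK. Qed.

Lemma sigma_inM u : inM p n u -> inM p n (sigma u).
Proof. by case: sigma_aut => + *; apply. Qed.
Lemma sigmaM u v : inM p n u -> inM p n v -> sigma (Mop u v) = Mop (sigma u) (sigma v).
Proof. by case: sigma_aut => _ + *; apply. Qed.
Lemma sigma_inj u v : inM p n u -> inM p n v -> sigma u = sigma v -> u = v.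
Proof. by case: sigma_aut => _ _ + *; apply. Qed.
Lemma sigma_surj v : inM p n v -> exists2 u, inM p n u & sigma u = v.
Proof. by case: sigma_aut => _ _ _; apply. Qed.

Definition psi x := phiF (sigma (phi_inv p phiG x)).

Lemma bottom_psi x : bottom piG x -> bottom piF (psi x).
Proof. by move=> /(phi_invP extG) [hx _]; apply/(bottom_phi extF)/sigma_inM. Qed.

Lemma psiD x y : bottom piG x -> bottom piG y -> psi (x ⊕ y) = psi x ⊕ psi y.
Proof.
move=> /(phi_invP extG) [hx ex] /(phi_invP extG) [hy ey].
rewrite /psi -{1}ex -{1}ey -(phiM extG) // (phiK extG); last exact: inM_Mop.
by rewrite sigmaM // (phiM extF) //; apply: sigma_inM.
Qed.

Lemma psi0 : psi gzero = gzero.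
Proof.
have b0 : bottom piG gzero := pi0 extG.
by apply: (@addgI _ (psi gzero)); rewrite -psiD // !addg0.
Qed.

Lemma psi_eq0 x : bottom piG x -> psi x = gzero -> x = gzero.
Proof.
move=> xb psi_x0; have [hx ex] := phi_invP extG xb.
have [h0 e0] := phi_invP extG (pi0 extG); rewrite -ex -e0; congr phiG.
apply: sigma_inj => //; apply: (phi_inj extF); try exact: sigma_inM.
exact: etrans psi_x0 (esym psi0).
Qed.

(* The only use of the hypothesis on the commutator functions. *)
Lemma psi_gcomm a b a' b' : piF a' = theta (piG a) -> piF b' = theta (piG b) ->
  psi (gcomm a b) = gcomm a' b'.
Proof.
move=> ea eb; have [hw ew] := phi_invP extG (pi_gcomm extG a b).
have [_ [a'' [b'' [ea'' eb'' e]]]] :=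
  comm_fun_sigma_theta (conj hw (ex_intro _ a (ex_intro _ b (And3 erefl erefl ew)))).
by rewrite /psi e; apply: (gcomm_pi_eq p_pr extF nilF); rewrite ?ea ?eb.
Qed.

Definition genG i :=
  if (insub i : option 'I_m) is Some j then top_lift_p piG (delta_mx 0 j) else gzero.
Definition genF i := top_lift_p piF (theta (piG (genG i))).

Lemma genG_char i : gmuln p (genG i) = gzero.
Proof.
rewrite /genG; case: insubP => [j _ _|_]; last exact: gmul0n.
exact: (top_lift_pP p_pr extG nilG _).2.
Qed.
Lemma genF_char i : gmuln p (genF i) = gzero.
Proof. exact: (top_lift_pP p_pr extF nilF _).2. Qed.
Lemma piF_genF i : piF (genF i) = theta (piG (genG i)).
Proof. exact: (top_lift_pP p_pr extF nilF _).1. Qed.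

Definition wordG (r : 'rV['F_p]_m) := word genG (coord r) m.
Definition wordF (r : 'rV['F_p]_m) := word genF (coord r) m.

Lemma piG_wordG r : piG (wordG r) = r.
Proof.
have pi_word k : piG (word genG (coord r) k) = \sum_(i < k) piG (genG i) *+ coord r i.
  elim: k => [|k IH]; first by rewrite big_ord0 (pi0 extG).
  by rewrite big_ord_recr /= (piD extG) IH (pi_gmuln extG).
rewrite pi_word [RHS]row_sum_delta; apply: eq_bigr => j _.
rewrite /genG /coord valK (top_lift_pP p_pr extG nilG _).1.
by rewrite -scaler_nat natr_Zp.
Qed.

Lemma piF_gmuln_genF k i : piF (gmuln k (genF i)) = theta (piG (gmuln k (genG i))).
Proof. by rewrite (pi_gmuln extF) (pi_gmuln extG) thetaMn piF_genF. Qed.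

Lemma piF_word c k : piF (word genF c k) = theta (piG (word genG c k)).
Proof.
elim: k => [|k IH] /=; first by rewrite (pi0 extF) (pi0 extG) theta0.
by rewrite (piD extF) (piD extG) thetaD IH piF_gmuln_genF.
Qed.

Lemma piF_wordF r : piF (wordF r) = theta r.
Proof. by rewrite piF_word -/(wordG r) piG_wordG. Qed.

Lemma bottom_word_defect c1 c2 k : bottom piG (word_defect genG c1 c2 k).
Proof.
elim: k => [|k IH] /=; first exact: (pi0 extG).
by apply: (bottomD extG) => //; apply: (pi_gcomm extG).
Qed.

Lemma psi_word_defect c1 c2 k : psi (word_defect genG c1 c2 k) = word_defect genF c1 c2 k.
Proof.
elim: k => [|k IH] /=; first exact: psi0.
rewrite psiD ?IH; [|exact: bottom_word_defect|exact: (pi_gcomm extG)].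
by rewrite (psi_gcomm (piF_gmuln_genF _ _) (piF_word _ _)).
Qed.

Lemma wordG_add r s : wordG r ⊕ wordG s = wordG (r + s) ⊕ word_defect genG (coord r) (coord s) m.
Proof.
apply: word_add; first exact: (gcomm_central p_pr extG nilG).
by move=> i; apply: gmuln_coordD => //; apply: genG_char.
Qed.
Lemma wordF_add r s : wordF r ⊕ wordF s = wordF (r + s) ⊕ word_defect genF (coord r) (coord s) m.
Proof.
apply: word_add; first exact: (gcomm_central p_pr extF nilF).
by move=> i; apply: gmuln_coordD => //; apply: genF_char.
Qed.

Lemma normal_formG x : exists r z, bottom piG z /\ x = wordG r ⊕ z.
Proof.
exists (piG x), (⊖ wordG (piG x) ⊕ x); rewrite addNKg; split=> //.
by apply: (bottom_pi_eq extG); rewrite piG_wordG.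
Qed.

Definition Psi x := wordF (piG x) ⊕ psi (⊖ wordG (piG x) ⊕ x).

Lemma PsiE r z : bottom piG z -> Psi (wordG r ⊕ z) = wordF r ⊕ psi z.
Proof. by move=> zb; rewrite /Psi (piD extG) piG_wordG zb addr0 addKg. Qed.

Lemma PsiD x y : Psi (x ⊕ y) = Psi x ⊕ Psi y.
Proof.
have [r [z [zb ->]]] := normal_formG x; have [s [w [wb ->]]] := normal_formG y.
set d := word_defect genG (coord r) (coord s) m.
have db : bottom piG d := bottom_word_defect _ _ m.
have cz := bottom_central p_pr extG nilG zb.
have cpz := bottom_central p_pr extF nilF (bottom_psi zb).
have -> : wordG r ⊕ z ⊕ (wordG s ⊕ w) = wordG (r + s) ⊕ (d ⊕ (z ⊕ w)).
  by rewrite -gaddA [z ⊕ _]gaddA cz !gaddA wordG_add -!gaddA.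
have dzwb : bottom piG (d ⊕ (z ⊕ w)) by apply: (bottomD extG) => //; apply: (bottomD extG).
rewrite !PsiE // !psiD ?psi_word_defect //; last exact: (bottomD extG).
by rewrite [RHS]gaddA -[wordF r ⊕ psi z ⊕ _]gaddA (cpz (wordF s)) !gaddA wordF_add.
Qed.

Lemma Psi_eq0 x : Psi x = gzero -> x = gzero.
Proof.
have [r [z [zb ->]]] := normal_formG x; rewrite PsiE // => e.
have r0 : r = 0.
  apply: theta_inj; rewrite theta0.
  by have := congr1 piF e; rewrite (piD extF) piF_wordF (bottom_psi zb) addr0 (pi0 extF).
move: e; rewrite r0 /wordF /wordG !word_coord0 !add0g.
exact: psi_eq0.
Qed.

Lemma Psi_surj y : exists x, Psi x = y.
Proof.
case: theta_aut => -[theta' thetaK thetaK'] _; set r := theta' (piF y).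
have /(bottom_pi_eq extF) : piF (wordF r) = piF y by rewrite piF_wordF thetaK'.
case/(pi_eq0 extF) => v hv ev; case: (sigma_surj hv) => u hu su.
exists (wordG r ⊕ phiG u); rewrite PsiE; last exact: (bottom_phi extG).
by rewrite /psi (phiK extG) // su ev addNKg.
Qed.

Lemma exists_group_iso : exists f : G -> F, group_iso f.
Proof.
exists Psi; apply: hom_iso; [exact: PsiD | | exact: Psi_surj].
exact: hom_inj PsiD Psi_eq0.
Qed.
End AutomorphismsToIsomorphism.

Theorem theorem1p2 (p n m : nat) (G F : group)
    (phiG : ('I_n -> algC) -> G) (piG : G -> 'rV['F_p]_m)
    (phiF : ('I_n -> algC) -> F) (piF : F -> 'rV['F_p]_m) :
  prime p ->
  nilpotent G -> chernikov_ext phiG piG ->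
  nilpotent F -> chernikov_ext phiF piF ->
  (exists f : G -> F, group_iso f) <->
  (exists sigma theta, [/\ autM p n sigma, autH theta &
     forall (x y : 'rV['F_p]_m) (w : 'I_n -> algC),
       comm_fun phiG piG x y w -> comm_fun phiF piF (theta x) (theta y) (sigma w)]).
Proof.
move=> p_pr nilG extG nilF extF; split=> [[f iso_f]|].
  have [g [g_add fK gK]] := group_iso_inv iso_f; have f_add := iso_f.2.
  exists (bottom_aut p phiG phiF f), (top_aut piG piF f); split.
  - exact: (autM_bottom_aut p_pr extG extF f_add g_add fK gK).
  - exact: (autH_top_aut p_pr extG extF f_add g_add fK gK).
  - exact: (comm_fun_aut p_pr extG extF f_add).
case=> sigma [theta [sigma_aut theta_aut comm_fun_st]].
exact: (exists_group_iso p_pr nilG extG nilF extF sigma_aut theta_aut comm_fun_st).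
Qed.
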